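(* Let $T$ be a left-linear term rewriting system and $\psi$ a trivial proof term for $T$. Then $\psi\approx src(\psi)$.
   Context: Setting. $T=(\Sigma,R)$: $\Sigma$ finite; rules $\mu: l\to r$ with $l$ finite, non-variable, linear, variables of $r$ among those of $l$. Terms are finite or infinite trees; limits w.r.t. $d(t,u)=2^{-k}$ ($k$ least depth of a difference), $d(t,t)=0$. Proof terms are terms over $\Sigma^R\cup\{\cdot/2\}$, where $\Sigma^R$ adds to $\Sigma$ a symbol $\mu$ of arity $n$ per rule $\mu:l[x_1,..,x_n]\to r[x_1,..,x_n]$. Multisteps are closed finite or infinite terms over $\Sigma^R$ ($src$: normal form under $\mu(\vec x)\to l[\vec x]$; $tgt$: normal form, if any, under $\mu(\vec x)\to r[\vec x]$; $mind$: $\omega$ if no rule symbol, else least depth of a rule-symbol occurrence). Proof terms are built from multisteps by $\psi_1\cdot\psi_2$ ($\psi_1$ convergent, $tgt(\psi_1)=src(\psi_2)$), infinite concatenation $\prod_{i<\omega}\psi_i=\psi_0\cdot(\psi_1\cdot\cdots)$ (convergent $\psi_i$, $tgt(\psi_i)=src(\psi_{i+1})$), $f(\psi_1,..,\psi_m)$ for $f\in\Sigma$, and $\mu(\psi_1,..,\psi_n)$; $src$ of a concatenation is that of its first factor, $src(f(\vec\psi))=f(src(\psi_1),..)$, $src(\mu(\vec\psi))=l[src(\psi_1),..]$; $mind$ is $\min$ over factors for concatenations, $1+\min$ for $f$, $0$ for $\mu$. A proof term is trivial iff it contains no rule-symbol occurrence. Permutation equivalence. $\approx_E$ is derivable in the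 equational logic whose axioms are the closed instances (both sides proof terms) of $src(\psi)\cdot\psi=\psi$; $\psi\cdot tgt(\psi)=\psi$ ($\psi$ convergent); $\psi\cdot(\phi\cdot\chi)=(\psi\cdot\phi)\cdot\chi$; $f(\vec\psi)\cdot f(\vec\phi)=f(\psi_1\cdot\phi_1,..)$; $\prod_i f(\psi^1_i,..,\psi^m_i)=f(\prod_i\psi^1_i,..)$; $\mu(\vec\psi)=\mu(src(\psi_1),..)\cdot r[\vec\psi]$; $\mu(\vec\psi)=l[\vec\psi]\cdot\mu(tgt(\psi_1),..)$ (all $\psi_i$ convergent); rules reflexivity, symmetry, transitivity and congruence for all symbols and binary/infinite concatenation. $\approx$ is derivable in this system extended by the limit rule: infer $\psi\approx\phi$ if for each $k<\omega$ there are $\chi_k,\psi'_k,\phi'_k$ with $\psi\approx_E\chi_k\cdot\psi'_k$, $\phi\approx_E\chi_k\cdot\phi'_k$, $mind(\psi'_k)>k$, $mind(\phi'_k)>k$. *)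

From mathcomp Require Import all_boot.
From Stdlib Require Import ClassicalEpsilon.

Set Implicit Arguments.
Unset Strict Implicit.
Unset Printing Implicit Defensive.

Inductive fterm (S : Type) : Type :=
| Var of nat
| App of S & seq (fterm S).
Arguments Var {S} _.

Fixpoint fwf (S : Type) (ar : S -> nat) (t : fterm S) : bool :=
  match t with
  | Var _ => true
  | App f ts => (size ts == ar f) && all (fwf ar) ts
  end.

Fixpoint fvars (S : Type) (t : fterm S) : seq nat :=
  match t with
  | Var j => [:: j]
  | App _ ts => flatten (map (@fvars S) ts)
  end.

Fixpoint fat (S : Type) (t : fterm S) (p : seq nat) {struct p} : option (S + nat) :=
  match p, t with
  | [::], Var j => Some (inr j)
  | [::], App f _ => Some (inl f)
  | _ :: _, Var _ => None
  | i :: q, App f ts => if i < size ts then fat (nth (Var 0) ts i) q else None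
  end.

(* Term rewriting systems.  A rule mu : l[x_0..x_{n-1}] -> r[x_0..x_{n-1}]   *)
(* has arity n = arR mu; l is non-variable and linear: each x_j (j < n)      *)
(* occurs exactly once in l and no other variable occurs; variables of r are  *)
(* among x_0..x_{n-1}.                                                        *)
Record TRS := {
  Sig : finType;
  arS : Sig -> nat;
  Rul : Type;
  arR : Rul -> nat;
  lhs : Rul -> fterm Sig;
  rhs : Rul -> fterm Sig;
  lhs_wf : forall mu, fwf arS (lhs mu);
  rhs_wf : forall mu, fwf arS (rhs mu);
  lhs_nonvar : forall mu, exists f ts, lhs mu = App f ts;
  lhs_linear : forall mu j, count_mem j (fvars (lhs mu)) = (j < arR mu : nat);
  rhs_vars : forall mu, all (fun j => j < arR mu) (fvars (rhs mu))
}.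

Section ProofTerms.
Variable T : TRS.

(* symbols of proof terms: Sigma, one symbol per rule, and binary concatenation *)
Inductive psym : Type :=
| PF of Sig T
| PR of Rul T
| PDot.

Definition psar (a : psym) : nat :=
  match a with PF f => arS f | PR mu => arR mu | PDot => 2 end.

(* finite or infinite trees, as partial maps from positions to symbols *)
Definition tree := seq nat -> option psym.

Definition wf (t : tree) : Prop :=
  t [::] <> None /\
  forall p i, t (rcons p i) <> None <-> exists a, t p = Some a /\ i < psar a.

Definition root (t : tree) : option psym := t [::].
Definition child (t : tree) (i : nat) : tree := fun q => t (i :: q).

Definition node (a : psym) (ts : nat -> tree) : tree := fun p =>
  match p with
  | [::] => Some a
  | i :: q => if i < psar a then ts i q else None
  end.

Definition dot (psi phi : tree) : tree :=
  node PDot (fun i => if i == 0 then psi else phi).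

(* infinite concatenation  prod_i psi_i = psi_0 . (psi_1 . ( ... )) *)
Fixpoint prod (ps : nat -> tree) (p : seq nat) {struct p} : option psym :=
  match p with
  | [::] => Some PDot
  | i :: q => if i == 0 then ps 0 q
              else if i == 1 then prod (fun n => ps n.+1) q else None
  end.

Fixpoint inst (t : fterm (Sig T)) (sigma : nat -> tree) (p : seq nat) {struct p}
  : option psym :=
  match t with
  | Var j => sigma j p
  | App f ts =>
      match p with
      | [::] => Some (PF f)
      | i :: q => if i < size ts then inst (nth (Var 0) ts i) sigma q else None
      end
  end.

(* n-th node of the right spine *)
Definition rsp (n : nat) (t : tree) : tree := iter n (fun u => child u 1) t.

(* src: symbol a occurs at position p of src(t) *)
Inductive spos : tree -> seq nat -> psym -> Prop :=
| sp_f t f : root t = Some (PF f) -> spos t [::] (PF f)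
| sp_fc t f i q a : root t = Some (PF f) -> i < arS f ->
    spos (child t i) q a -> spos t (i :: q) a
| sp_r t mu p f : root t = Some (PR mu) -> fat (lhs mu) p = Some (inl f) ->
    spos t p (PF f)
| sp_rv t mu p1 j q a : root t = Some (PR mu) -> fat (lhs mu) p1 = Some (inr j) ->
    spos (child t j) q a -> spos t (p1 ++ q) a
| sp_dot t p a : root t = Some PDot -> spos (child t 0) p a -> spos t p a.

(* tgt: symbol a occurs at position p of tgt(t); for an infinite
   concatenation tgt is the (pointwise = metric) limit of the targets *)
Inductive tpos : tree -> seq nat -> psym -> Prop :=
| tp_f t f : root t = Some (PF f) -> tpos t [::] (PF f)
| tp_fc t f i q a : root t = Some (PF f) -> i < arS f ->
    tpos (child t i) q a -> tpos t (i :: q) a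
| tp_r t mu p f : root t = Some (PR mu) -> fat (rhs mu) p = Some (inl f) ->
    tpos t p (PF f)
| tp_rv t mu p1 j q a : root t = Some (PR mu) -> fat (rhs mu) p1 = Some (inr j) ->
    tpos (child t j) q a -> tpos t (p1 ++ q) a
| tp_dot t p a : root t = Some PDot -> tpos (child t 1) p a -> tpos t p a
| tp_lim t p a : (forall n, root (rsp n t) = Some PDot) ->
    (exists N, forall n, N <= n -> tpos (child (rsp n t) 0) p a) -> tpos t p a.

Definition of_rel (R : seq nat -> psym -> Prop) : tree := fun p =>
  epsilon (inhabits None) (fun o : option psym => forall a, o = Some a <-> R p a).

Definition src (t : tree) : tree := of_rel (spos t).
Definition tgt (t : tree) : tree := of_rel (tpos t).

Definition multistep (t : tree) : Prop := wf t /\ forall p, t p <> Some PDot.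

Definition sigdepth (t : tree) (p : seq nat) : nat :=
  count (fun i => if t (take i p) is Some (PF _) then true else false)
        (iota 0 (size p)).

Definition mind_gt (t : tree) (k : nat) : Prop :=
  forall p mu, t p = Some (PR mu) -> k < sigdepth t p.

Definition trivial (t : tree) : Prop := forall p mu, t p <> Some (PR mu).

Inductive conv : tree -> Prop :=
| cv_ms m : multistep m -> wf (tgt m) -> conv m
| cv_dot psi phi : conv psi -> conv phi -> conv (dot psi phi)
| cv_prod ps : (forall i, conv (ps i)) ->
    (forall k, exists N, forall n, N <= n -> mind_gt (ps n) k) -> conv (prod ps)
| cv_f f ps : (forall i, i < arS f -> conv (ps i)) -> conv (node (PF f) ps)
| cv_r mu ps : (forall i, i < arR mu -> conv (ps i)) -> conv (node (PR mu) ps).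

Inductive PT : tree -> Prop :=
| PT_ms m : multistep m -> PT m
| PT_dot psi phi : PT psi -> PT phi -> conv psi -> tgt psi = src phi ->
    PT (dot psi phi)
| PT_prod ps : (forall i, PT (ps i)) -> (forall i, conv (ps i)) ->
    (forall i, tgt (ps i) = src (ps i.+1)) -> PT (prod ps)
| PT_f f ps : (forall i, i < arS f -> PT (ps i)) -> PT (node (PF f) ps)
| PT_r mu ps : (forall i, i < arR mu -> PT (ps i)) -> PT (node (PR mu) ps).

(* Permutation equivalence.  eqlog false = derivability in the equational
   logic (~E); eqlog true = derivability with the limit rule added (~). *)
Inductive eqlog : bool -> tree -> tree -> Prop :=
| ax_src b psi : PT psi -> PT (dot (src psi) psi) ->
    eqlog b (dot (src psi) psi) psi
| ax_tgt b psi : PT psi -> conv psi -> PT (dot psi (tgt psi)) ->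
    eqlog b (dot psi (tgt psi)) psi
| ax_assoc b psi phi chi : PT (dot psi (dot phi chi)) -> PT (dot (dot psi phi) chi) ->
    eqlog b (dot psi (dot phi chi)) (dot (dot psi phi) chi)
| ax_fdot b f ps qs : PT (dot (node (PF f) ps) (node (PF f) qs)) ->
    PT (node (PF f) (fun i => dot (ps i) (qs i))) ->
    eqlog b (dot (node (PF f) ps) (node (PF f) qs)) (node (PF f) (fun i => dot (ps i) (qs i)))
| ax_fprod b f (ps : nat -> nat -> tree) :
    PT (prod (fun i => node (PF f) (ps i))) ->
    PT (node (PF f) (fun j => prod (fun i => ps i j))) ->
    eqlog b (prod (fun i => node (PF f) (ps i))) (node (PF f) (fun j => prod (fun i => ps i j)))
| ax_out b mu ps : PT (node (PR mu) ps) ->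
    PT (dot (node (PR mu) (fun j => src (ps j))) (inst (rhs mu) ps)) ->
    eqlog b (node (PR mu) ps) (dot (node (PR mu) (fun j => src (ps j))) (inst (rhs mu) ps))
| ax_in b mu ps : PT (node (PR mu) ps) -> (forall j, j < arR mu -> conv (ps j)) ->
    PT (dot (inst (lhs mu) ps) (node (PR mu) (fun j => tgt (ps j)))) ->
    eqlog b (node (PR mu) ps) (dot (inst (lhs mu) ps) (node (PR mu) (fun j => tgt (ps j))))
| eq_refl b psi : PT psi -> eqlog b psi psi
| eq_sym b psi phi : eqlog b psi phi -> eqlog b phi psi
| eq_trans b psi phi chi : eqlog b psi phi -> eqlog b phi chi -> eqlog b psi chi
| cong_f b f ps qs : (forall i, i < arS f -> eqlog b (ps i) (qs i)) ->
    PT (node (PF f) ps) -> PT (node (PF f) qs) ->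
    eqlog b (node (PF f) ps) (node (PF f) qs)
| cong_r b mu ps qs : (forall i, i < arR mu -> eqlog b (ps i) (qs i)) ->
    PT (node (PR mu) ps) -> PT (node (PR mu) qs) ->
    eqlog b (node (PR mu) ps) (node (PR mu) qs)
| cong_dot b psi1 psi2 phi1 phi2 : eqlog b psi1 phi1 -> eqlog b psi2 phi2 ->
    PT (dot psi1 psi2) -> PT (dot phi1 phi2) ->
    eqlog b (dot psi1 psi2) (dot phi1 phi2)
| cong_prod b ps qs : (forall i, eqlog b (ps i) (qs i)) ->
    PT (prod ps) -> PT (prod qs) -> eqlog b (prod ps) (prod qs)
| limit_rule psi phi :
    (forall k, exists chi psi' phi',
        eqlog false psi (dot chi psi') /\ eqlog false phi (dot chi phi') /\
        mind_gt psi' k /\ mind_gt phi' k) ->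
    eqlog true psi phi.

Definition permeqE := eqlog false.
Definition permeq := eqlog true.

End ProofTerms.

(* The source of a trivial proof term ψ is a Σ-term: a well-formed tree
   without rule symbols or concatenations, hence a multistep that is its own
   source and target.  So the axioms for sources and targets give
   ψ ≈_E src(ψ)·ψ and src(ψ) ≈_E src(ψ)·src(ψ).  Both right factors are
   trivial, so their mind is ω and the limit rule applies with χ = src(ψ) at
   every depth k. *)
From Pilot Require Import Defs.
From Stdlib Require Import ClassicalEpsilon Classical.
From Stdlib Require Import FunctionalExtensionality PropExtensionality.
From mathcomp Require Import all_boot.

Set Implicit Arguments.
Unset Strict Implicit.
Unset Printing Implicit Defensive.

Section TrivialSource.
Variable T : TRS.
Implicit Types (t psi phi : tree T) (p q : seq nat) (a : psym T).

Definition sigma_only t := forall p a, t p = Some a -> exists f, a = PF f.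

Lemma trivial_child t i : trivial t -> trivial (child t i).
Proof. by move=> Ht p; apply: Ht (i :: p). Qed.

Lemma sigma_only_child t i : sigma_only t -> sigma_only (child t i).
Proof. by move=> Ht p; apply: Ht (i :: p). Qed.

Lemma sigma_only_trivial t : sigma_only t -> trivial t.
Proof. by move=> Ht p mu /Ht [f]. Qed.

Lemma sigma_only_multistep t : wf t -> sigma_only t -> multistep t.
Proof. by move=> Hw Ht; split=> // p /Ht [f]. Qed.

Lemma trivial_mind_gt t k : trivial t -> mind_gt t k.
Proof. by move=> Ht p mu /Ht. Qed.

Lemma wf_prefix t p q : wf t -> t (p ++ q) <> None -> t p <> None.
Proof.
move=> Hw; elim/last_ind: q => [|q i IH]; first by rewrite cats0.
rewrite -rcons_cat => /(proj2 Hw) [a [Ha _]]; apply: IH; congruence.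
Qed.

Lemma wf_root_child t i q : wf t -> t (i :: q) <> None ->
  exists a, t [::] = Some a /\ i < psar a.
Proof.
move=> Hw Hq; apply/(proj2 Hw [::] i).
exact: (wf_prefix (p := [:: i]) Hw Hq).
Qed.

Lemma wf_child t i : wf t -> t [:: i] <> None -> wf (child t i).
Proof. by move=> Hw Hi; split=> // p; apply: (proj2 Hw (i :: p)). Qed.

Lemma child_node a ts i : i < psar a -> child (node a ts) i = ts i.
Proof. by move=> Hi; apply: functional_extensionality => q; rewrite /child /= Hi. Qed.

Lemma wf_node a ts : (forall i, i < psar a -> wf (ts i)) -> wf (node a ts).
Proof.
move=> Hts; split=> // -[|i p] j /=.
  split=> [|[b [[<-] Hj]]]; last by rewrite Hj; case: (Hts j Hj).
  by case: ifP => // Hj _; exists a.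
case: ifP => [Hi|_]; first exact: (proj2 (Hts i Hi) p j).
by split=> [|[b []]].
Qed.

Lemma of_relP (R : seq nat -> psym T -> Prop) p :
  (forall a b, R p a -> R p b -> a = b) ->
  forall a, of_rel R p = Some a <-> R p a.
Proof.
move=> Rfun; apply: (epsilon_spec _ (fun o => forall a, o = Some a <-> R p a)).
have [[a Ra]|noR] := classic (exists a, R p a).
  by exists (Some a) => b; split=> [[<-] //|Rb]; rewrite (Rfun _ _ Ra Rb).
by exists None => b; split=> // Rb; case: noR; exists b.
Qed.

Lemma of_rel_eq (R : seq nat -> psym T -> Prop) t :
  (forall p a, R p a <-> t p = Some a) -> of_rel R = t.
Proof.
move=> HR; apply: functional_extensionality => p.
have Rfun a b : R p a -> R p b -> a = b by move=> /HR Ha /HR Hb; congruence.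
case Et: (t p) => [a|]; first by apply/(of_relP Rfun)/HR.
case Eo: (of_rel R p) => [a|] //.
by move: Eo => /(of_relP Rfun)/HR; rewrite Et.
Qed.

Lemma of_rel_ext (R R' : seq nat -> psym T -> Prop) :
  (forall p a, R p a <-> R' p a) -> of_rel R = of_rel R'.
Proof.
move=> HR; apply: functional_extensionality => p; rewrite /of_rel; congr epsilon.
apply: functional_extensionality => o; apply: propositional_extensionality.
by split=> Ho a; rewrite Ho HR.
Qed.

Lemma spos_PF t p a : spos t p a -> exists f, a = PF f.
Proof. by elim=> //; eauto. Qed.

Lemma spos_F_inv t f p a : t [::] = Some (PF f) -> spos t p a ->
  (p = [::] /\ a = PF f) \/
  exists i q, [/\ p = i :: q, i < arS f & spos (child t i) q a].
Proof.
move=> + H; case: H => {t p a} [t g|t g i q a|t mu p g|t mu p1 j q a|t p a];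
  rewrite /Defs.root => -> //.
- by move=> [<-]; left.
- by move=> Hi Hc [<-]; right; exists i, q.
Qed.

Lemma spos_dot_inv t p a : t [::] = Some (@PDot T) ->
  spos t p a -> spos (child t 0) p a.
Proof.
by move=> + H; case: H => {t p a} [t f|t f i q a|t mu p f|t mu p1 j q a|t p a];
  rewrite /Defs.root => ->.
Qed.

Lemma spos_functional t p a b : trivial t -> spos t p a -> spos t p b -> a = b.
Proof.
move=> + Ha; elim: Ha b => {t p a}.
- by move=> t f Hr b _ /(spos_F_inv Hr) [[_ ->] | [i [q [] //]]].
- move=> t f i q a Hr Hi _ IH b Ht /(spos_F_inv Hr) [[] // | [i' [q' [[<- <-] _ Hb]]]].
  by apply: IH Hb; apply: trivial_child.
- by move=> t mu p f Hr _ b /(_ [::] mu Hr).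
- by move=> t mu p1 j q a Hr _ _ _ b /(_ [::] mu Hr).
- move=> t p a Hr _ IH b Ht /(spos_dot_inv Hr) Hb.
  by apply: IH Hb; apply: trivial_child.
Qed.

Lemma srcP t : trivial t -> forall p a, src t p = Some a <-> spos t p a.
Proof. by move=> Ht p; apply: of_relP => a b; apply: spos_functional. Qed.

Lemma src_sigma_only t : trivial t -> sigma_only (src t).
Proof. by move=> Ht p a /(srcP Ht) /spos_PF. Qed.

Lemma src_dot psi phi : src (dot psi phi) = src psi.
Proof.
by apply: of_rel_ext => p a; split=> [/(spos_dot_inv erefl) | Ha]; last by apply: sp_dot.
Qed.

Lemma src_prod (ps : nat -> tree T) : src (prod ps) = src (ps 0).
Proof.
by apply: of_rel_ext => p a; split=> [/(spos_dot_inv erefl) | Ha]; last by apply: sp_dot.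
Qed.

Lemma src_node_F f (ps : nat -> tree T) : (forall i, i < arS f -> trivial (ps i)) ->
  src (node (PF f) ps) = node (PF f) (fun i => src (ps i)).
Proof.
move=> Hts; apply: of_rel_eq => -[|i q] a /=; split.
- by case/(spos_F_inv erefl) => [[_ ->] | [i [q []]]].
- by case=> <-; apply: sp_f.
- case/(spos_F_inv erefl) => [[] // | [i' [q' [[<- <-] Hi Hc]]]].
  by rewrite Hi; apply/(srcP (Hts _ Hi)); rewrite -(@child_node (PF f) ps i Hi).
- case: ifP => // Hi /(srcP (Hts _ Hi)) Hc.
  by apply: (sp_fc (f := f)) => //; rewrite (@child_node (PF f) ps i Hi).
Qed.

Lemma sigma_only_descend t i q : wf t -> sigma_only t -> t (i :: q) <> None ->
  exists f, [/\ t [::] = Some (PF f), i < arS f & wf (child t i)].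
Proof.
move=> Hw Ht Hq; have [b [Hb Hi]] := wf_root_child Hw Hq.
have [f Ef] := Ht _ _ Hb; subst b; exists f; split=> //.
by apply: wf_child => //; apply: (wf_prefix (q := q)).
Qed.

Lemma spos_sigma t p a : wf t -> sigma_only t -> spos t p a <-> t p = Some a.
Proof.
move=> Hw Ht; split.
- move=> H; elim: H Ht => {t p a Hw}
    [t f Hr|t f i q a _ _ _ IH|t mu p f Hr _|t mu p1 j q a Hr _ _ _|t p a Hr _ _] Ht //;
    first exact/IH/sigma_only_child; by have [g Eg] := Ht _ _ Hr.
- elim: p t Hw Ht a => [|i q IH] t Hw Ht a Ha.
    by have [f Ef] := Ht _ _ Ha; subst a; apply: sp_f.
  have Hq : t (i :: q) <> None by rewrite Ha.
  have [f [Hr Hi Hwc]] := sigma_only_descend Hw Ht Hq.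
  by apply: (sp_fc Hr Hi); apply: IH Hwc _ _ Ha; apply: sigma_only_child.
Qed.

Lemma tpos_sigma t p a : wf t -> sigma_only t -> tpos t p a <-> t p = Some a.
Proof.
move=> Hw Ht; split.
- move=> H; elim: H Ht => {t p a Hw}
    [t f Hr|t f i q a _ _ _ IH|t mu p f Hr _|t mu p1 j q a Hr _ _ _|t p a Hr _ _
    |t p a /(_ 0) Hr _] Ht //;
    first exact/IH/sigma_only_child; by have [g Eg] := Ht _ _ Hr.
- elim: p t Hw Ht a => [|i q IH] t Hw Ht a Ha.
    by have [f Ef] := Ht _ _ Ha; subst a; apply: tp_f.
  have Hq : t (i :: q) <> None by rewrite Ha.
  have [f [Hr Hi Hwc]] := sigma_only_descend Hw Ht Hq.
  by apply: (tp_fc Hr Hi); apply: IH Hwc _ _ Ha; apply: sigma_only_child.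
Qed.

Lemma src_sigma t : wf t -> sigma_only t -> src t = t.
Proof. by move=> Hw Ht; apply: of_rel_eq => p a; apply: spos_sigma. Qed.

Lemma tgt_sigma t : wf t -> sigma_only t -> tgt t = t.
Proof. by move=> Hw Ht; apply: of_rel_eq => p a; apply: tpos_sigma. Qed.

Lemma wf_src psi : PT psi -> trivial psi -> wf (src psi).
Proof.
elim=> {psi} [m [Hw Hnd]|psi phi _ IH _ _ _ _|ps _ IH _ _|f ps _ IH|mu ps _ _] Ht.
- have Hm : sigma_only m.
    by move=> p [f|mu|] Ha; [exists f | case: (Ht _ _ Ha) | case: (Hnd _ Ha)].
  by rewrite src_sigma.
- by rewrite src_dot; apply: IH; exact: (trivial_child (i := 0) Ht).
- by rewrite src_prod; apply: IH; exact: (trivial_child (i := 0) Ht).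
- have Hts i : i < arS f -> trivial (ps i).
    by move=> Hi; rewrite -(@child_node (PF f) ps i Hi); apply: trivial_child.
  by rewrite src_node_F //; apply: wf_node => i Hi; apply: IH; last exact: Hts.
- by case: (Ht [::] mu).
Qed.

End TrivialSource.

Theorem mainTheorem10 (T : TRS) (psi : tree T) :
  PT psi -> trivial psi -> permeq psi (src psi).
Proof.
move=> HPT Ht; set S := src psi.
have HwS : wf S by apply: wf_src.
have HsS : sigma_only S by apply: src_sigma_only.
have HmS : multistep S by apply: sigma_only_multistep.
have HtgtS : tgt S = S by apply: tgt_sigma.
have HPS : PT S by apply: PT_ms.
have HcS : conv S by apply: cv_ms; rewrite ?HtgtS.
have HPSpsi : PT (dot S psi) by apply: PT_dot; rewrite ?HtgtS.
have HPSS : PT (dot S (tgt S)).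
  by rewrite HtgtS; apply: PT_dot; rewrite ?HtgtS ?src_sigma.
apply: limit_rule => k; exists S, psi, S; split; [|split; [|split]].
- exact/Defs.eq_sym/ax_src.
- by apply: Defs.eq_sym; rewrite -{2}HtgtS; apply: ax_tgt.
- exact: trivial_mind_gt.
- exact/trivial_mind_gt/sigma_only_trivial.
Qed.
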